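(* Let ${\mathcal M}$ be a $q$-matroid on $E=\mathbb{F}_q^n$ of rank $r$. If there is no nonzero vector of $E$ lying in all the bases of ${\mathcal M}$, then $\chi(I_{{\mathcal M}})\neq0$.
   Context: A $q$-matroid is a pair $(E,\rho)$, $E=\mathbb{F}_q^n$, with $\rho$ from the set of subspaces of $E$ to $\mathbb{Z}_{\ge0}$ satisfying $0\le\rho(X)\le\dim X$, monotonicity under inclusion, and $\rho(X+Y)+\rho(X\cap Y)\le\rho(X)+\rho(Y)$; its rank is $\rho(E)$. A subspace $U$ is independent if $\rho(U)=\dim U$; a basis is a maximal independent subspace. The order complex $I_{{\mathcal M}}$ is the simplicial complex whose faces are the chains $V_1\subsetneq\cdots\subsetneq V_k$ ($k\ge0$, empty chain included) of nonzero independent subspaces, and $\chi(I_{{\mathcal M}})=\sum_{k\ge0}(-1)^{k-1}f_k$, where $f_k$ is the number of such chains with $k$ members. *)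

From HB Require Import structures.
From mathcomp Require Import all_boot all_order all_algebra all_field.
Set Implicit Arguments. Unset Strict Implicit. Unset Printing Implicit Defensive.
Import GRing.Theory Num.Theory.
Import vector.VectorInternalTheory.

(* E = F^n with F a finite field (F = F_q); subspaces of E are {vspace 'rV[F]_n}. *)
Notation qspace F n := {vspace 'rV[F]_n}.

HB.instance Definition _ (F : finFieldType) (n : nat) :=
  [Countable of qspace F n by <:].
HB.instance Definition _ (F : finFieldType) (n : nat) :=
  [Finite of qspace F n by <:].

Section QMatroid.
Variables (F : finFieldType) (n : nat).
Local Open Scope ring_scope.

Definition is_qmatroid (rho : qspace F n -> nat) : Prop :=
  [/\ (forall X : qspace F n, (rho X <= \dim X)%N),
      (forall X Y : qspace F n, (X <= Y)%VS -> (rho X <= rho Y)%N) &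
      (forall X Y : qspace F n,
         (rho (X + Y)%VS + rho (X :&: Y)%VS <= rho X + rho Y)%N)].

Definition qindependent (rho : qspace F n -> nat) (U : qspace F n) : bool :=
  rho U == \dim U.

Definition qbasis (rho : qspace F n -> nat) (B : qspace F n) : Prop :=
  qindependent rho B /\
  (forall U : qspace F n, qindependent rho U -> (B <= U)%VS -> U = B).

Definition vproper (U V : qspace F n) : bool := (U <= V)%VS && (U != V).

Definition nchains (rho : qspace F n -> nat) (k : nat) : nat :=
  #|[set t : k.-tuple (qspace F n) |
      all (fun V => (V != 0%VS) && qindependent rho V) t && sorted vproper t]|.

(* chi(I_M) = sum_{k >= 0} (-1)^(k-1) f_k ; f_k = 0 once k exceeds the
   number of subspaces (a chain has pairwise distinct members). *)
Definition chi_order_complex (rho : qspace F n -> nat) : int :=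
  \sum_(k < #|{: qspace F n}|.+2) (-1) ^+ k.+1 * (nchains rho k)%:Z.

End QMatroid.

(* Grouping the chains of I_M by their largest member X, the chains below a
   nonzero X contribute -mu(0, X), and by the crosscut theorem mu(0, X) is the
   alternating sum (-1)^|T| over the sets T of lines spanning X.  Hence
   chi(I_M) is minus the alternating sum over the sets of lines with independent
   span.  Such sums obey deletion-contraction, and once multiplied by the sign
   (-1)^(rho(Z + <Q>) - dim Z) they are nonnegative for every independent Z and
   set of lines Q.  When E is not independent, contracting lines one at a time
   along a chain of independent spaces, after deleting the lines that became
   loops, shows that the signed sum is at least 1; this works because the lines
   outside a proper subspace still span E.  If E is independent, it is the
   only basis and contains every vector, which the hypothesis excludes. *)

From mathcomp Require Import all_boot all_order all_algebra all_field.
From mathcomp Require Import zify.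
Set Implicit Arguments. Unset Strict Implicit. Unset Printing Implicit Defensive.
Import Order.TTheory GRing.Theory Num.Theory.
Local Open Scope ring_scope.

Lemma sum_tuple0 (T : finType) (G : seq T -> nat) :
  (\sum_(t : 0.-tuple T) G t = G [::])%N.
Proof.
rewrite (eq_bigr (fun _ => G [::])) => [|t _]; last by rewrite tuple0.
by rewrite sum_nat_const card_tuple expn0 mul1n.
Qed.

Lemma sum_tupleS (T : finType) k (G : seq T -> nat) :
  (\sum_(t : k.+1.-tuple T) G t = \sum_(x : T) \sum_(s : k.-tuple T) G (x :: s))%N.
Proof.
rewrite pair_big /= (reindex (fun p : T * k.-tuple T => [tuple of p.1 :: p.2])) //=.
exists (fun t => (thead t, [tuple of behead t])) => [[x s]|t] _ /=.
  by congr (_, _); apply: val_inj.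
by case: t / tupleP => x s; apply: val_inj.
Qed.

Section SubsetSums.
Variables (T : finType) (R : nmodType).

Lemma sum_subsets_setD1 (G : {set T} -> R) (Q : {set T}) p : p \in Q ->
  \sum_(S : {set T} | S \subset Q) G S =
  \sum_(S : {set T} | S \subset Q :\ p) (G S + G (p |: S)).
Proof.
move=> pQ; rewrite big_split /= (bigID (fun S : {set T} => p \in S)) /= addrC.
congr (_ + _); first by apply: eq_bigl => S; rewrite subsetD1.
rewrite (reindex_onto (fun S => p |: S) (fun S => S :\ p)) /=; last first.
  by move=> S /andP[_ pS]; rewrite setD1K.
apply: eq_bigl => S; rewrite subUset sub1set pQ setU11 andbT subsetD1.
have [pS|pS] /= := boolP (p \in S); last by rewrite setU1K // eqxx !andbT.
rewrite andbF; apply/negbTE/nandP; right; apply/eqP => /setP /(_ p).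
by rewrite !inE eqxx pS.
Qed.

End SubsetSums.

Lemma sum_subsets_sign (T : finType) (S : {set T}) : S != set0 ->
  \sum_(U : {set T} | U \subset S) ((-1) ^+ #|U| : int) = 0.
Proof.
case/set0Pn => p pS; rewrite (sum_subsets_setD1 _ pS) big1 // => U.
by rewrite subsetD1 => /andP[_ pU]; rewrite cardsU1 pU exprS mulN1r addrN.
Qed.

Section Lines.
Variables (F : finFieldType) (n : nat).
Local Notation V := (qspace F n).
Implicit Types (X Y Z p : V) (Q S : {set V}).

Definition vsum S : V := (\sum_(X in S) X)%VS.

Definition lines : {set V} := [set X : V | \dim X == 1%N].

Definition lines_outside Y : {set V} := [set X in lines | ~~ (X <= Y)%VS].

Lemma vsum0 : vsum set0 = 0%VS.
Proof. exact: big_set0. Qed.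

Lemma vsumU1 p S : p \notin S -> vsum (p |: S) = (p + vsum S)%VS.
Proof. exact: big_setU1. Qed.

Lemma vsumD1 p S : p \in S -> vsum S = (p + vsum (S :\ p))%VS.
Proof. exact: big_setD1. Qed.

Lemma sub_vsum X S : X \in S -> (X <= vsum S)%VS.
Proof. by move=> XS; apply: (sumv_sup X). Qed.

Lemma vsumS S Q : S \subset Q -> (vsum S <= vsum Q)%VS.
Proof. by move=> SQ; apply/subv_sumP => X /(subsetP SQ); apply: sub_vsum. Qed.

Lemma vsum_lines_eq0 S : S \subset lines -> (vsum S == 0%VS) = (S == set0).
Proof.
move=> Slines; apply/idP/eqP => [S0|->]; last by rewrite vsum0.
apply/eqP/negPn/negP => /set0Pn [X XS].
have := subsetP Slines X XS; rewrite inE.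
by move: (sub_vsum XS); rewrite (eqP S0) subv0 => /eqP ->; rewrite dimv0.
Qed.

Lemma line_dim p : p \in lines -> \dim p = 1%N.
Proof. by rewrite inE => /eqP. Qed.

Lemma lines_outside_sub Y : lines_outside Y \subset lines.
Proof. by apply/subsetP => X; rewrite inE => /andP[]. Qed.

Lemma lines_outsideS Y Y' : (Y <= Y')%VS -> lines_outside Y' \subset lines_outside Y.
Proof.
move=> YY'; apply/subsetP => X; rewrite !inE => /andP[-> XY'].
by apply: contra XY' => /subv_trans; apply.
Qed.

Lemma lines_outside0 : lines_outside 0%VS = lines.
Proof.
apply/setP => X; rewrite !inE subv0; have [->|_] := eqVneq X 0%VS.
  by rewrite dimv0.
by rewrite andbT.
Qed.

Lemma dim_fullv : \dim (fullv : V) = n.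
Proof. by rewrite dimvf (dim_matrix F 1 n); exact: mul1n. Qed.

Lemma dim_add_line Z p : \dim p = 1%N -> ~~ (p <= Z)%VS ->
  \dim (Z + p) = (\dim Z).+1.
Proof.
move=> dp pZ; have := dimv_sum_cap Z p; rewrite dp.
have : (\dim (Z :&: p) <= 1)%N by rewrite -[X in (_ <= X)%N]dp dimvS // capvSr.
case E: (\dim (Z :&: p)) => [|[|//]] _; first by rewrite addn0 addn1.
have /eqP Ep : (Z :&: p == p)%VS by rewrite eqEdim capvSr dp E.
by case/negP: pZ; rewrite -Ep capvSl.
Qed.

(* A vector of the proper subspace Y is the difference of two vectors outside Y. *)
Lemma vsum_lines_outside Y : Y != fullv -> vsum (lines_outside Y) = fullv.
Proof.
move=> Yfull; apply/eqP; rewrite eqEsubv subvf /=.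
have [w _ wY] : exists2 w, w \in fullv & w \notin Y.
  by apply/subvPn; apply: contra Yfull => fY; rewrite eqEsubv subvf.
have outside v : v \notin Y -> (<[v]> <= vsum (lines_outside Y))%VS.
  move=> vY; have vnz : v != 0 by apply: contraNneq vY => ->; rewrite mem0v.
  by apply: sub_vsum; rewrite !inE dim_vline vnz -memvE vY.
apply/subvP => v _; have [vY|vY] := boolP (v \in Y); last first.
  by apply: (subvP (outside v vY)); apply: memv_line.
have vwY : v + w \notin Y by apply: contra wY => /memvB/(_ vY); rewrite addrC addKr.
have -> : v = (v + w) - w by rewrite addrK.
apply: memvB; [exact: subvP (outside _ vwY) _ (memv_line _)|].
exact: subvP (outside _ wY) _ (memv_line _).
Qed.

Lemma addv_vsumD1 Z p Q : p \in Q -> (p <= Z + vsum (Q :\ p))%VS ->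
  (Z + vsum (Q :\ p))%VS = (Z + vsum Q)%VS.
Proof.
move=> pQ pS; rewrite [in RHS](vsumD1 pQ) addvA [(Z + p)%VS]addvC -addvA.
exact/esym/addv_idPr.
Qed.

End Lines.

Arguments vsum {F n}.
Arguments lines {F n}.

Section RankFunction.
Variables (F : finFieldType) (n : nat) (rho : qspace F n -> nat).
Hypothesis rhoM : is_qmatroid rho.
Local Notation V := (qspace F n).
Local Notation qindep := (qindependent rho).
Implicit Types (X Y Z A p : V) (S : {set V}).

Lemma rho_le_dim X : (rho X <= \dim X)%N.
Proof. by case: rhoM. Qed.

Lemma rho_mono X Y : (X <= Y)%VS -> (rho X <= rho Y)%N.
Proof. by case: rhoM => _ + _; apply. Qed.

Lemma rho_submod X Y : (rho (X + Y)%VS + rho (X :&: Y)%VS <= rho X + rho Y)%N.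
Proof. by case: rhoM. Qed.

Lemma rho_growth_le_dim X Y : (X <= Y)%VS -> (rho Y + \dim X <= rho X + \dim Y)%N.
Proof.
move=> XY; set C := (Y :\: X)%VS.
have eY : (X + C)%VS = Y by rewrite addvC addv_diff; apply/addv_idPl.
have dY : \dim Y = (\dim X + \dim C)%N.
  by rewrite -eY dimv_disjoint_sum // capvC capv_diff.
have := rho_submod X C; rewrite eY capvC capv_diff.
have := rho_le_dim C; rewrite dY; lia.
Qed.

Lemma qindependentS X Y : (X <= Y)%VS -> qindep Y -> qindep X.
Proof.
move=> XY /eqP rY; apply/eqP.
by have := rho_growth_le_dim XY; have := rho_le_dim X; rewrite rY; lia.
Qed.

Lemma qindependent0 : qindep 0%VS.
Proof. by apply/eqP; have := rho_le_dim 0%VS; rewrite dimv0; lia. Qed.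

Lemma rho_diminishing_returns A A' p : (A <= A')%VS ->
  (rho (A' + p)%VS + rho A <= rho (A + p)%VS + rho A')%N.
Proof.
move=> AA'; have := rho_submod (A + p)%VS A'.
have -> : (A + p + A')%VS = (A' + p)%VS.
  apply/eqP; rewrite eqEsubv; apply/andP; split.
    by rewrite !subv_add addvSl addvSr (subv_trans AA') ?addvSl.
  by rewrite subv_add addvSr (subv_trans (addvSr A p)) ?addvSl.
have : (rho A <= rho ((A + p) :&: A')%VS)%N.
  by apply: rho_mono; rewrite subv_cap addvSl AA'.
lia.
Qed.

Lemma rho_add_dependent_line Z p : qindep Z -> \dim p = 1%N -> ~~ (p <= Z)%VS ->
  ~~ qindep (Z + p) -> rho (Z + p) = rho Z.
Proof.
move=> /eqP rZ dp pZ; rewrite /qindependent (dim_add_line dp pZ) => /eqP Zp.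
have := rho_mono (addvSl Z p); have := rho_le_dim (Z + p).
by rewrite (dim_add_line dp pZ) rZ; lia.
Qed.

Lemma rho_add_vsum Z S : (forall p, p \in S -> rho (Z + p) = rho Z) ->
  rho (Z + vsum S) = rho Z.
Proof.
move=> rS; apply: (big_rec (fun X => rho (Z + X)%VS = rho Z)) => [|p X pS rX].
  by rewrite addv0.
rewrite [(p + X)%VS]addvC addvA; apply/eqP; rewrite eqn_leq.
have := rho_diminishing_returns p (addvSl Z X); have := rho_mono (addvSl (Z + X) p).
by rewrite rX rS //; lia.
Qed.

Lemma qbasis_eq_fullv B : qindep fullv -> qbasis rho B -> B = fullv.
Proof. by move=> iE [_ /(_ fullv iE (subvf B))]. Qed.

End RankFunction.

Section AlternatingSums.
Variables (F : finFieldType) (n : nat) (rho : qspace F n -> nat).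
Hypothesis rhoM : is_qmatroid rho.
Local Notation V := (qspace F n).
Local Notation qindep := (qindependent rho).
Implicit Types (Z p : V) (Q S : {set V}).

(* Up to sign, the reduced Euler characteristic of the complex of subsets of Q
   that are independent in the contraction by Z. *)
Definition altsum Z Q : int :=
  \sum_(S : {set V} | S \subset Q)
     (if qindep (Z + vsum S) then (-1) ^+ #|S| else 0).

Definition signed_altsum Z Q : int :=
  (-1) ^+ (rho (Z + vsum Q) - \dim Z) * altsum Z Q.

Lemma altsum_set0 Z : qindep Z -> altsum Z set0 = 1.
Proof.
move=> iZ; rewrite /altsum (big_pred1 set0) => [|S]; last by rewrite subset0.
by rewrite vsum0 addv0 iZ cards0.
Qed.

Lemma altsum_dependent Z Q : ~~ qindep Z -> altsum Z Q = 0.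
Proof.
move=> dZ; apply: big1 => S _; case: ifP => // iZS.
by case/negP: dZ; apply: (qindependentS rhoM) iZS; rewrite // addvSl.
Qed.

Lemma altsum_delcon Z Q p : p \in Q ->
  altsum Z Q = altsum Z (Q :\ p) - altsum (Z + p) (Q :\ p).
Proof.
move=> pQ; rewrite /altsum (sum_subsets_setD1 _ pQ) big_split -sumrN /=.
congr (_ + _); apply: eq_bigr => S; rewrite subsetD1 => /andP[_ pS].
rewrite vsumU1 // addvA cardsU1 pS exprS.
by case: ifP; rewrite ?mulN1r ?oppr0.
Qed.

Lemma altsum_loop Z Q p : p \in Q -> (p <= Z)%VS -> altsum Z Q = 0.
Proof. by move=> pQ /addv_idPl pZ; rewrite (altsum_delcon _ pQ) pZ subrr. Qed.

(* If deleting p drops the rank, p is a coloop: adding it preserves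
   independence, by diminishing returns. *)
Lemma altsum_coloop Z Q p : p \in Q -> \dim p = 1%N ->
  (rho (Z + vsum (Q :\ p)) < rho (Z + vsum Q))%N -> altsum Z Q = 0.
Proof.
move=> pQ dp rp; rewrite (altsum_delcon _ pQ); apply/eqP; rewrite subr_eq0.
apply/eqP/eq_bigr => S SQ; congr (if _ then _ else _); apply/idP/idP; last first.
  by apply: (qindependentS rhoM); rewrite addvS ?addvSl.
rewrite -addvA [(p + _)%VS]addvC addvA; set A := (Z + vsum S)%VS.
move=> /eqP iA; apply/eqP/anti_leq; rewrite rho_le_dim //=.
have AQp : (A <= Z + vsum (Q :\ p))%VS by rewrite addvS ?vsumS.
have := rho_diminishing_returns rhoM p AQp.
rewrite -addvA [(_ + p)%VS]addvC -vsumD1 //.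
by have := dimv_sum_cap A p; rewrite dp iA; lia.
Qed.

Lemma signed_altsum_dependent Z Q : ~~ qindep Z -> signed_altsum Z Q = 0.
Proof. by move=> dZ; rewrite /signed_altsum altsum_dependent ?mulr0. Qed.

Lemma signed_altsum_delcon Z Q p : qindep Z -> p \in lines -> p \in Q ->
  ~~ (p <= Z)%VS -> rho (Z + vsum (Q :\ p)) = rho (Z + vsum Q) ->
  signed_altsum Z Q = signed_altsum Z (Q :\ p) + signed_altsum (Z + p) (Q :\ p).
Proof.
move=> iZ /line_dim dp pQ pZ rp; have [iZp|dZp] := boolP (qindep (Z + p)); last first.
  by rewrite [signed_altsum (Z + p) _]signed_altsum_dependent // addr0
    /signed_altsum (altsum_delcon _ pQ)
    [altsum (Z + p) _]altsum_dependent // subr0 rp.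
have eZp : (Z + p + vsum (Q :\ p))%VS = (Z + vsum Q)%VS by rewrite -addvA -vsumD1.
have : (\dim (Z + p) <= rho (Z + vsum Q))%N.
  by rewrite -(eqP iZp) -eZp (rho_mono rhoM) // addvSl.
rewrite /signed_altsum (altsum_delcon _ pQ) eZp rp (dim_add_line dp pZ) => rZp.
have -> : (rho (Z + vsum Q) - \dim Z = (rho (Z + vsum Q) - (\dim Z).+1).+1)%N by lia.
by rewrite exprS mulN1r mulrBr !mulNr opprK.
Qed.

Lemma signed_altsum_ge0 Z Q : Q \subset lines -> 0 <= signed_altsum Z Q.
Proof.
have [k Qk] := ubnP #|Q|; elim: k => // k IH in Z Q Qk *; move=> Qlines.
have [iZ|dZ] := boolP (qindep Z); last by rewrite signed_altsum_dependent.
have [->|[p pQ]] := set_0Vmem Q.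
  by rewrite /signed_altsum altsum_set0 // vsum0 addv0 (eqP iZ) subnn.
have pl := subsetP Qlines p pQ.
have IHp Y : 0 <= signed_altsum Y (Q :\ p).
  apply: IH; last by apply: subset_trans Qlines; apply: subsetDl.
  by move: Qk; rewrite (cardsD1 p Q) pQ.
have [pZ|pZ] := boolP (p <= Z)%VS.
  by rewrite /signed_altsum (altsum_loop pQ pZ) mulr0.
have : (rho (Z + vsum (Q :\ p)) <= rho (Z + vsum Q))%N.
  by rewrite (rho_mono rhoM) // addvS // vsumS // subsetDl.
rewrite leq_eqVlt => /orP[/eqP rp|rp].
  by rewrite (signed_altsum_delcon iZ pl pQ pZ rp) addr_ge0.
by rewrite /signed_altsum (altsum_coloop pQ (line_dim pl) rp) mulr0.
Qed.

Lemma signed_altsum_spanned Z Q p : qindep Z -> p \in lines_outside Z ->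
  p \in Q -> (p <= Z + vsum (Q :\ p))%VS ->
  signed_altsum Z Q = signed_altsum Z (Q :\ p) + signed_altsum (Z + p) (Q :\ p).
Proof.
rewrite inE => iZ /andP[pl pZ] pQ pspan.
by rewrite (signed_altsum_delcon iZ pl pQ pZ) // addv_vsumD1.
Qed.

Lemma signed_altsum_subset_le Z S Q : qindep Z -> Q \subset lines_outside Z ->
  S \subset Q -> (vsum Q <= Z + vsum S)%VS ->
  signed_altsum Z S <= signed_altsum Z Q.
Proof.
move=> iZ; have [k QSk] := ubnP #|Q :\: S|; elim: k => // k IH in Q QSk *.
move=> QZ SQ QS; have [QS0|[p /setDP[pQ pS]]] := set_0Vmem (Q :\: S).
  by have /eqP -> : Q == S by rewrite eqEsubset -setD_eq0 QS0 eqxx.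
have SQp : S \subset Q :\ p.
  by rewrite subsetD1 SQ; apply: contraNN pS.
have QpZ : Q :\ p \subset lines_outside Z by apply: subset_trans QZ; apply: subsetDl.
have pspan : (p <= Z + vsum (Q :\ p))%VS.
  by rewrite (subv_trans (sub_vsum pQ)) // (subv_trans QS) // addvS // vsumS.
rewrite (signed_altsum_spanned iZ (subsetP QZ p pQ) pQ pspan) -[X in X <= _]addr0.
apply: lerD; last exact: signed_altsum_ge0 (subset_trans QpZ (lines_outside_sub _)).
apply: IH => //; last by rewrite (subv_trans _ QS) // vsumS // subsetDl.
by move: QSk; rewrite setDDl setUC -setDDl (cardsD1 p) !inE pQ pS.
Qed.

Lemma signed_altsum_contract_le Z Q p : qindep Z -> Q \subset lines_outside Z ->
  p \in Q -> (p <= Z + vsum (Q :\ p))%VS ->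
  signed_altsum (Z + p) (Q :\ p) <= signed_altsum Z Q.
Proof.
move=> iZ QZ pQ pspan; rewrite (signed_altsum_spanned iZ (subsetP QZ p pQ) pQ pspan).
rewrite lerDr signed_altsum_ge0 // (subset_trans _ (lines_outside_sub Z)) //.
by apply: subset_trans QZ; apply: subsetDl.
Qed.

Lemma signed_altsum_top Z Q : qindep Z -> \dim Z = rho fullv ->
  Q \subset lines_outside Z -> signed_altsum Z Q = 1.
Proof.
move=> iZ dZ QZ.
have rZ S : rho (Z + vsum S) = \dim Z.
  apply/anti_leq; rewrite {1}dZ (rho_mono rhoM) ?subvf //= -{1}(eqP iZ).
  by rewrite (rho_mono rhoM) ?addvSl.
have dep S : S \subset Q -> S != set0 -> ~~ qindep (Z + vsum S).
  move=> SQ /set0Pn[x xS]; rewrite /qindependent rZ; apply/negP => /eqP dZS.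
  have ZS : (Z + vsum S)%VS = Z.
    by apply/eqP; rewrite eq_sym eqEdim addvSl -dZS leqnn.
  have := subsetP QZ x (subsetP SQ x xS); rewrite inE => /andP[_].
  by rewrite -ZS (subv_trans (sub_vsum xS)) ?addvSr.
rewrite /signed_altsum rZ subnn mul1r /altsum (bigD1 set0) ?sub0set //= big1.
  by rewrite vsum0 addv0 iZ cards0 addr0.
by move=> S /andP[SQ S0]; rewrite (negbTE (dep S SQ S0)).
Qed.

Lemma exists_augmenting_line Z : qindep Z -> (\dim Z < rho fullv)%N ->
  exists2 p, p \in lines_outside Z & qindep (Z + p).
Proof.
move=> iZ dZ; have [/exists_inP[p pZ iZp]|/exists_inPn noaug] :=
  boolP [exists p in lines_outside Z, qindep (Z + p)]; first by exists p.
have Zfull : Z != fullv by apply: contraTneq dZ => ->; rewrite -leqNgt rho_le_dim.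
have := rho_add_vsum rhoM (Z := Z) (S := lines_outside Z).
rewrite vsum_lines_outside // (addv_idPr (subvf Z)) => rfull.
suff rZ : rho fullv = rho Z by rewrite rZ (eqP iZ) ltnn in dZ.
apply: rfull => p pZ; move: (pZ); rewrite inE => /andP[pl pZ'].
by rewrite (rho_add_dependent_line rhoM iZ (line_dim pl) pZ' (noaug p pZ)).
Qed.

Lemma signed_altsum_pos Z : (rho fullv < n)%N \/ n = 0%N -> qindep Z ->
  1 <= signed_altsum Z (lines_outside Z).
Proof.
move=> rfull; have [k kZ] := ubnP (rho fullv - \dim Z).
elim: k => // k IH in Z kZ *; move=> iZ.
have [topZ|ltZ] := leqP (rho fullv) (\dim Z).
  rewrite signed_altsum_top //; apply/anti_leq; rewrite topZ -(eqP iZ).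
  by rewrite (rho_mono rhoM) ?subvf.
have [p pZ iZp] := exists_augmenting_line iZ ltZ.
have dZp : \dim (Z + p) = (\dim Z).+1.
  by move: pZ; rewrite inE => /andP[/line_dim dp pZ']; apply: dim_add_line.
have Zpfull : (Z + p)%VS != fullv.
  apply/eqP => Zpf; have := rho_le_dim rhoM fullv; rewrite dim_fullv.
  by move: dZp; rewrite Zpf dim_fullv; case: rfull; lia.
set S := p |: lines_outside (Z + p).
have Sp : S :\ p = lines_outside (Z + p) by rewrite setU1K // inE addvSr andbF.
have SZ : S \subset lines_outside Z.
  by rewrite subUset sub1set pZ lines_outsideS ?addvSl.
have vsumS_full : vsum S = fullv.
  by apply/eqP; rewrite eqEsubv subvf -(vsum_lines_outside Zpfull) vsumS ?subsetUr.
apply: le_trans (signed_altsum_subset_le iZ (subxx _) SZ _); last first.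
  by rewrite vsumS_full (addv_idPr (subvf Z)) subvf.
apply: le_trans (signed_altsum_contract_le iZ SZ (setU11 _ _) _); last first.
  by rewrite Sp vsum_lines_outside // (addv_idPr (subvf Z)) subvf.
by rewrite Sp; apply: IH => //; move: kZ; rewrite dZp; lia.
Qed.

End AlternatingSums.

Section ChainsBelow.
Variables (F : finFieldType) (n : nat).
Local Notation V := (qspace F n).
Implicit Types (X I : V) (T : {set V}).

Definition vsuper X Y := vproper Y X.

Lemma vsuper_trans : transitive vsuper.
Proof.
move=> Y X Z /andP[YX nYX] /andP[ZY nZY]; rewrite /vsuper /vproper (subv_trans ZY YX).
by apply: contraNneq nYX => eZX; apply/eqP/subv_anti; rewrite YX -eZX ZY.
Qed.

Lemma vsuper_irr : irreflexive vsuper.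
Proof. by move=> X; rewrite /vsuper /vproper eqxx andbF. Qed.

Local Notation chain_below I s := (all (fun X => X != 0%VS) s && path vsuper I s).

Definition nchains_below k I : nat := (\sum_(s : k.-tuple V) chain_below I s)%N.

Lemma nchains_below0 I : nchains_below 0 I = 1%N.
Proof. exact: (sum_tuple0 (fun s => chain_below I s)). Qed.

Lemma nchains_belowS k I :
  nchains_below k.+1 I = (\sum_(X | (X != 0%VS) && vproper X I) nchains_below k X)%N.
Proof.
rewrite [RHS]big_mkcond /nchains_below.
rewrite (sum_tupleS _ (fun s => chain_below I s)).
apply: eq_bigr => X _ /=; rewrite {1}/vsuper.
case: (X != 0%VS) (vproper X I) => [] [] //=; by rewrite big1 // => s; rewrite ?andbF.
Qed.

Lemma nchains_below_overflow k I : (#|{: V}| <= k)%N -> nchains_below k I = 0%N.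
Proof.
move=> Vk; apply: big1 => s _; apply/eqP; rewrite eqb0; apply/negP => /andP[_ Is].
have /card_uniqP Iuniq : uniq (I :: s) by apply: (sorted_uniq vsuper_trans vsuper_irr).
by have := max_card (mem (I :: s)); rewrite Iuniq /= size_tuple; lia.
Qed.

(* By Hall's theorem, minus the Moebius function mu(0, I) of the subspace lattice. *)
Definition alt_chains_below I : int :=
  \sum_(k < #|{: V}|.+1) (-1) ^+ k * (nchains_below k I)%:R.

Lemma alt_chains_below_rec I :
  alt_chains_below I = 1 - \sum_(X | (X != 0%VS) && vproper X I) alt_chains_below X.
Proof.
rewrite /alt_chains_below big_ord_recl nchains_below0 expr0 mul1r; congr (_ + _).
have step (i : 'I_#|{: V}|) :
    (-1) ^+ bump 0 i * (nchains_below (bump 0 i) I)%:R =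
    - \sum_(X | (X != 0%VS) && vproper X I) (-1) ^+ i * (nchains_below i X)%:R :> int.
  rewrite /bump leq0n add1n nchains_belowS natr_sum mulr_sumr -sumrN.
  by apply: eq_bigr => X _; rewrite exprS mulN1r mulNr.
rewrite (eq_bigr _ (fun i _ => step i)) sumrN exchange_big /=; congr (- _).
apply: eq_bigr => X _; rewrite [RHS]big_ord_recr /=.
by rewrite nchains_below_overflow // mulr0 addr0.
Qed.

Definition crosscut I : int :=
  \sum_(T : {set V} | (T \subset lines) && (vsum T == I)) (-1) ^+ #|T|.

Lemma crosscut0 : crosscut 0%VS = 1.
Proof.
rewrite /crosscut (big_pred1 set0) ?cards0 // => T.
have [Tl|Tl] /= := boolP (T \subset lines); first by rewrite vsum_lines_eq0.
by apply/esym/eqP => T0; rewrite T0 sub0set in Tl.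
Qed.

Lemma sum_crosscut_below I : I != 0%VS ->
  \sum_(X | (X != 0%VS) && (X <= I)%VS) crosscut X = -1.
Proof.
move=> I0; set LI := [set X in lines | (X <= I)%VS].
have LI0 : LI != set0.
  apply/set0Pn; exists <[vpick I]>%VS.
  by rewrite !inE dim_vline vpick0 I0 -memvE memv_pick.
have LIlines : LI \subset lines by apply/subsetP => Y; rewrite inE => /andP[].
pose P T := (T \subset LI) && (T != set0).
have inner X : (X != 0%VS) && (X <= I)%VS ->
    \sum_(T : {set V} | (T \subset lines) && (vsum T == X)) ((-1) ^+ #|T| : int) =
    \sum_(T | P T && (vsum T == X)) (-1) ^+ #|T|.
  move=> /andP[X0 XI]; apply: eq_bigl => T.
  have [TX|] := eqVneq (vsum T) X; rewrite ?andbF ?andbT //; rewrite -TX in X0 XI.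
  rewrite /P; apply/idP/andP => [Tl|[TLI _]]; last first.
    exact: subset_trans TLI LIlines.
  split; last by rewrite -(vsum_lines_eq0 Tl).
  by apply/subsetP => Y YT; rewrite inE (subsetP Tl) //= (subv_trans (sub_vsum YT)).
rewrite /crosscut (eq_bigr _ inner) -(partition_big _ _ (P := P)).
  have := sum_subsets_sign LI0; rewrite (bigD1 set0) ?sub0set //= cards0 => sum0.
  by move/eqP: sum0; rewrite expr0 addrC addr_eq0 => /eqP.
move=> T /andP[TLI T0].
have Tlines : T \subset lines := subset_trans TLI LIlines.
rewrite vsum_lines_eq0 // T0; apply/subv_sumP => X /(subsetP TLI).
by rewrite inE => /andP[].
Qed.

Lemma alt_chains_below_crosscut I : I != 0%VS -> alt_chains_below I = - crosscut I.
Proof.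
have [k Ik] := ubnP (\dim I); elim: k => // k IH in I Ik *; move=> I0.
rewrite alt_chains_below_rec (eq_bigr (fun X => - crosscut X)); last first.
  move=> X /andP[X0 /andP[XI XnI]]; apply: IH X0.
  by rewrite -ltnS (leq_trans _ Ik) // ltnS (ltn_leqif (dimv_leqif_eq XI)).
have := sum_crosscut_below I0; rewrite (bigD1 I) ?I0 ?subvv //=.
rewrite (eq_bigl (fun X => (X != 0%VS) && vproper X I)) => [sumI|X]; last first.
  by rewrite /vproper andbA.
by rewrite sumrN opprK -[1]opprK -sumI opprD subrK.
Qed.

End ChainsBelow.

Arguments vsuper {F n}.

Section OrderComplex.
Variables (F : finFieldType) (n : nat) (rho : qspace F n -> nat).
Hypothesis rhoM : is_qmatroid rho.
Local Notation V := (qspace F n).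
Local Notation qindep := (qindependent rho).
Local Notation desc_chain s :=
  (all (fun X => (X != 0%VS) && qindep X) s && sorted vsuper s).

Lemma nchains_desc k : nchains rho k = (\sum_(t : k.-tuple V) desc_chain t)%N.
Proof.
rewrite /nchains -sum1dep_card big_mkcond /=.
have rev_inj : injective (fun t : k.-tuple V => [tuple of rev t]).
  by move=> t1 t2 /(congr1 val) /(congr1 rev); rewrite !revK => /val_inj.
rewrite (reindex_inj rev_inj) /=; apply: eq_bigr => t _.
by rewrite all_rev rev_sorted; case: (_ && _).
Qed.

Lemma nchains0 : nchains rho 0 = 1%N.
Proof. by rewrite nchains_desc (sum_tuple0 (fun s => desc_chain s)). Qed.

Lemma nchainsS k :
  nchains rho k.+1 = (\sum_(X | (X != 0%VS) && qindep X) nchains_below k X)%N.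
Proof.
rewrite nchains_desc [RHS]big_mkcond /=.
rewrite (sum_tupleS _ (fun s => desc_chain s)).
apply: eq_bigr => X _ /=; have [iX|dX] := boolP ((X != 0%VS) && qindep X); last first.
  by rewrite big1 // => s _; rewrite (negbTE dX).
apply: eq_bigr => s _; case Xs: (path vsuper X s); rewrite ?andbF //= !andbT.
have /allP belowX := order_path_min (@vsuper_trans F n) Xs.
congr nat_of_bool; apply: eq_in_all => Y /belowX /andP[YX _]; case/andP: iX => _ iX.
by rewrite (qindependentS rhoM YX iX) andbT.
Qed.

Lemma altsum0_crosscut : altsum rho 0%VS lines = \sum_(X | qindep X) crosscut X.
Proof.
rewrite /altsum (eq_bigr (fun T => if qindep (vsum T) then (-1) ^+ #|T| else 0));
  last by move=> T _; rewrite add0v.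
rewrite -big_mkcondr /= (partition_big vsum qindep) => [|T /andP[]] //.
apply: eq_bigr => X iX; apply: eq_bigl => T.
by case: eqP => [->|]; rewrite ?andbF ?iX ?andbT.
Qed.

Lemma chi_order_complex_altsum : chi_order_complex rho = - altsum rho 0%VS lines.
Proof.
rewrite /chi_order_complex big_ord_recl nchains0 expr1 mulN1r.
have step (i : 'I_#|{: V}|.+1) :
    (-1) ^+ (bump 0 i).+1 * (nchains rho (bump 0 i))%:Z =
    \sum_(X | (X != 0%VS) && qindep X) (-1) ^+ i * (nchains_below i X)%:R :> int.
  by rewrite /bump leq0n add1n nchainsS -natz natr_sum mulr_sumr !exprS !mulN1r opprK.
rewrite (eq_bigr _ (fun i _ => step i)) exchange_big /=.
rewrite (eq_bigr (fun X => - crosscut X)) => [|X /andP[X0 _]]; last first.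
  exact: alt_chains_below_crosscut.
rewrite sumrN altsum0_crosscut [in RHS](bigD1 0%VS) ?qindependent0 //= crosscut0 opprD.
by congr (_ - _); apply: eq_bigl => X; rewrite andbC.
Qed.

End OrderComplex.

Unset Implicit Arguments.
Theorem proposition5p5 (F : finFieldType) (n : nat)
  (rho : qspace F n -> nat) (r : nat)
  (hM : is_qmatroid rho) (hr : rho fullv = r)
  (hnone : ~ (exists v : 'rV[F]_n, v != 0 /\
               (forall B : qspace F n, qbasis rho B -> v \in B))) :
  chi_order_complex rho != 0.
Proof.
have rfull : (rho fullv < n)%N \/ n = 0%N.
  have [n0|n0] := eqVneq n 0%N; [by right | left].
  have := rho_le_dim hM fullv; rewrite dim_fullv leq_eqVlt => /orP[/eqP rE|//].
  case: hnone; exists (vpick fullv); split; first by rewrite vpick0 -dimv_eq0 dim_fullv.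
  move=> B /qbasis_eq_fullv -> //; first exact: memv_pick.
  by rewrite /qindependent dim_fullv rE.
rewrite chi_order_complex_altsum // oppr_eq0 -lines_outside0.
have := signed_altsum_pos hM rfull (qindependent0 hM).
by rewrite /signed_altsum; apply: contraTneq => ->; rewrite mulr0.
Qed.
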